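(* (i) For all contexts $\Gamma,\Delta$: if $\Gamma\approx_\alpha\Delta$ and $\Gamma\ \mathrm{ok}$ then $\Delta\ \mathrm{ok}$. (ii) For all contexts $\Gamma,\Delta$ and terms $M,N,A$: if $\Gamma\approx_\alpha\Delta$, $M\sim_\alpha N$ and $\Gamma\vdash M:A$, then $\Delta\vdash N:A$.
   Context: Let $\mathcal V$ (the variables) be a type with decidable equality, equipped with functions $\mathrm{encode}:\mathcal V\to\mathbb N$ and $\mathrm{decode}:\mathbb N\to\mathcal V$ such that $\mathrm{encode}(\mathrm{decode}\,n)=n$ for all $n$. Let $\mathcal C$ (the constants) be any type. Terms $\Lambda$ are generated by: $c\,k$ ($k\in\mathcal C$), $v\,x$ ($x\in\mathcal V$), $\lambda[x:A]M$, $\Pi[x:A]B$ and $M\cdot N$; in $\lambda[x:A]M$ and $\Pi[x:A]B$ the name $x$ binds in $M$ (resp. $B$) but not in $A$. Terms are raw first-order syntax (not identified up to renaming of bound variables) and $\equiv$ denotes syntactic identity. The list of free variables is $\mathrm{fv}(c\,k)=[\,]$, $\mathrm{fv}(v\,x)=[x]$, $\mathrm{fv}(\lambda[x:A]M)=\mathrm{fv}\,A\mathbin{+\!\!+}(\mathrm{fv}\,M-x)$, $\mathrm{fv}(\Pi[x:A]B)=\mathrm{fv}\,A\mathbin{+\!\!+}(\mathrm{fv}\,B-x)$, $\mathrm{fv}(M\cdot N)=\mathrm{fv}\,M\mathbin{+\!\!+}\mathrm{fv}\,N$, where $\mathbin{+\!\!+}$ is list concatenation and $xs-x$ deletes every occurrence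 of $x$ from $xs$. Fix a function $\chi':\mathrm{List}\,\mathbb N\to\mathbb N$ with $\chi'(ns)\notin ns$ for every list $ns$, and put $X'(xs)=\mathrm{decode}(\chi'(\mathrm{map}\ \mathrm{encode}\ xs))$. A substitution is any function $\sigma:\mathcal V\to\Lambda$; $\iota=v$ is the identity substitution; $(\sigma,x:=N)(y)=N$ if $y=x$ and $\sigma\,y$ otherwise. For a substitution $\sigma$ and a list $xs$ of variables, $X(\sigma,xs)=X'(\text{concatenation of the lists }\mathrm{fv}(\sigma\,y)\text{ for }y\in xs)$. The action $M\bullet\sigma$ is defined by structural recursion: $c\,k\bullet\sigma=c\,k$; $v\,x\bullet\sigma=\sigma\,x$; $(M\cdot N)\bullet\sigma=(M\bullet\sigma)\cdot(N\bullet\sigma)$; $(\lambda[x:A]M)\bullet\sigma=\lambda[y:A\bullet\sigma](M\bullet(\sigma,x:=v\,y))$ with $y=X(\sigma,\mathrm{fv}\,M-x)$; $(\Pi[x:A]B)\bullet\sigma=\Pi[y:A\bullet\sigma](B\bullet(\sigma,x:=v\,y))$ with $y=X(\sigma,\mathrm{fv}\,B-x)$. Unary substitution is $M[x:=N]=M\bullet(\iota,x:=N)$. $\alpha$-conversion $\sim_\alpha$ is the inductively defined relation with rules: $c\,k\sim_\alpha c\,k$; $v\,x\sim_\alpha v\,x$; $M\cdot N\sim_\alpha M'\cdot N'$ if $M\sim_\alpha M'$ and $N\sim_\alpha N'$; $\lambda[x:A]M\sim_\alpha\lambda[x':A']M'$ if $A\sim_\alpha A'$ and there is a variable $y$ with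 $y\notin\mathrm{fv}\,M-x$, $y\notin\mathrm{fv}\,M'-x'$ and $M[x:=v\,y]\equiv M'[x':=v\,y]$; and the same rule with $\Pi$ in place of $\lambda$. $\beta$-contraction is $(\lambda[x:A]M)\cdot N\ \triangleright_\beta\ M[x:=N]$. One-step $\beta$-reduction $\to_\beta$ is its contextual closure, inductively: $M\to_\beta N$ if $M\triangleright_\beta N$; $\lambda[x:A]M\to_\beta\lambda[x:A]M'$ and $\Pi[x:A]M\to_\beta\Pi[x:A]M'$ if $M\to_\beta M'$; $\lambda[x:A]M\to_\beta\lambda[x:A']M$ and $\Pi[x:A]M\to_\beta\Pi[x:A']M$ if $A\to_\beta A'$; $M\cdot P\to_\beta N\cdot P$ and $P\cdot M\to_\beta P\cdot N$ if $M\to_\beta N$. $\beta$-conversion $\simeq_\beta$ is the equivalence (reflexive–symmetric–transitive) closure of $\sim_\alpha\cup\to_\beta$. Pure Type System: fix a binary relation $\mathcal A\subseteq\mathcal C\times\mathcal C$ (axioms) and a ternary relation $\mathcal R\subseteq\mathcal C\times\mathcal C\times\mathcal C$ (rules). A context is a finite list of pairs $(x,A)$ with $x\in\mathcal V$, $A\in\Lambda$; $\Gamma,x:A$ denotes the list $(x,A)::\Gamma$; $\mathrm{dom}\,\Gamma$ is the list of first components; $(x,A)\in\Gamma$ is list membership. The judgments $\Gamma\ \mathrm{ok}$ and $\Gamma\vdash M:A$ are defined mutually inductively by: (nil) $[\,]\ \mathrm{ok}$; (cons) if $\Gamma\ \mathrm{ok}$, $\Gamma\vdash A:c\,s$ and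 $x\notin\mathrm{dom}\,\Gamma$ then $\Gamma,x:A\ \mathrm{ok}$; (sort) if $\Gamma\ \mathrm{ok}$ and $\mathcal A\,s_1\,s_2$ then $\Gamma\vdash c\,s_1:c\,s_2$; (var) if $\Gamma\ \mathrm{ok}$ and $(x,A)\in\Gamma$ then $\Gamma\vdash v\,x:A$; (prod) if $\mathcal R\,s_1\,s_2\,s_3$, $\Gamma\vdash A:c\,s_1$ and for every $y\notin\mathrm{dom}\,\Gamma$, $\Gamma,y:A\vdash B[x:=v\,y]:c\,s_2$, then $\Gamma\vdash\Pi[x:A]B:c\,s_3$; (abs) if $\mathcal R\,s_1\,s_2\,s_3$, $\Gamma\vdash A:c\,s_1$, for every $z\notin\mathrm{dom}\,\Gamma$, $\Gamma,z:A\vdash B[y:=v\,z]:c\,s_2$, and for every $z\notin\mathrm{dom}\,\Gamma$, $\Gamma,z:A\vdash M[x:=v\,z]:B[y:=v\,z]$, then $\Gamma\vdash\lambda[x:A]M:\Pi[y:A]B$; (app) if $\Gamma\vdash M:\Pi[x:A]B$, $\Gamma\vdash N:A$ and $\Gamma\vdash B[x:=N]:c\,s$ for some $s$, then $\Gamma\vdash M\cdot N:B[x:=N]$; (conv) if $\Gamma\vdash M:A$, $A\simeq_\beta B$ and $\Gamma\vdash B:c\,s$ for some $s$, then $\Gamma\vdash M:B$. (The premises quantified over all fresh names in (prod) and (abs) are infinitely branching.) $\Gamma\approx_\alpha\Delta$ means: $\Gamma$ and $\Delta$ have the same length and, position by position, the entries $(x,A)$ of $\Gamma$ and $(y,B)$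 of $\Delta$ satisfy $x=y$ and $A\sim_\alpha B$. *)

From Stdlib Require Import List Relations.
Import ListNotations.

Section PTS.
Context {V C : Type}.
Variable (V_eq_dec : forall x y : V, {x = y} + {x <> y}).
Variables (encode : V -> nat) (decode : nat -> V) (chi' : list nat -> nat).
Variables (Ax : C -> C -> Prop) (Rl : C -> C -> C -> Prop).

Inductive term : Type :=
| tc : C -> term
| tv : V -> term
| tlam : V -> term -> term -> term
| tpi : V -> term -> term -> term
| tapp : term -> term -> term.

Definition lremove (xs : list V) (x : V) : list V :=
  filter (fun y => if V_eq_dec y x then false else true) xs.

Fixpoint fv (M : term) : list V :=
  match M with
  | tc _ => []
  | tv x => [x]
  | tlam x A M => fv A ++ lremove (fv M) x
  | tpi x A B => fv A ++ lremove (fv B) x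
  | tapp M N => fv M ++ fv N
  end.

Definition Xp (xs : list V) : V := decode (chi' (map encode xs)).

Definition subst_t := V -> term.
Definition iota : subst_t := tv.
Definition upd (s : subst_t) (x : V) (N : term) : subst_t :=
  fun y => if V_eq_dec y x then N else s y.

Definition Xs (s : subst_t) (xs : list V) : V :=
  Xp (flat_map (fun y => fv (s y)) xs).

Fixpoint act (M : term) (s : subst_t) : term :=
  match M with
  | tc k => tc k
  | tv x => s x
  | tapp M N => tapp (act M s) (act N s)
  | tlam x A M =>
      let y := Xs s (lremove (fv M) x) in
      tlam y (act A s) (act M (upd s x (tv y)))
  | tpi x A B =>
      let y := Xs s (lremove (fv B) x) in
      tpi y (act A s) (act B (upd s x (tv y)))
  end.

Definition usubst (M : term) (x : V) (N : term) : term := act M (upd iota x N).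

Inductive alpha : term -> term -> Prop :=
| alpha_c k : alpha (tc k) (tc k)
| alpha_v x : alpha (tv x) (tv x)
| alpha_app M N M' N' : alpha M M' -> alpha N N' -> alpha (tapp M N) (tapp M' N')
| alpha_lam x A M x' A' M' y :
    alpha A A' -> ~ In y (lremove (fv M) x) -> ~ In y (lremove (fv M') x') ->
    usubst M x (tv y) = usubst M' x' (tv y) ->
    alpha (tlam x A M) (tlam x' A' M')
| alpha_pi x A M x' A' M' y :
    alpha A A' -> ~ In y (lremove (fv M) x) -> ~ In y (lremove (fv M') x') ->
    usubst M x (tv y) = usubst M' x' (tv y) ->
    alpha (tpi x A M) (tpi x' A' M').

Inductive beta_contr : term -> term -> Prop :=
| bc x A M N : beta_contr (tapp (tlam x A M) N) (usubst M x N).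

Inductive beta1 : term -> term -> Prop :=
| b1_contr M N : beta_contr M N -> beta1 M N
| b1_lam_body x A M M' : beta1 M M' -> beta1 (tlam x A M) (tlam x A M')
| b1_pi_body x A M M' : beta1 M M' -> beta1 (tpi x A M) (tpi x A M')
| b1_lam_ty x A A' M : beta1 A A' -> beta1 (tlam x A M) (tlam x A' M)
| b1_pi_ty x A A' M : beta1 A A' -> beta1 (tpi x A M) (tpi x A' M)
| b1_appl M N P : beta1 M N -> beta1 (tapp M P) (tapp N P)
| b1_appr M N P : beta1 M N -> beta1 (tapp P M) (tapp P N).

Definition beta_conv : relation term :=
  clos_refl_sym_trans term (fun M N => alpha M N \/ beta1 M N).

Definition ctx := list (V * term).
Definition dom (G : ctx) : list V := map fst G.

Inductive ctx_ok : ctx -> Prop :=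
| ok_nil : ctx_ok []
| ok_cons G x A s : ctx_ok G -> typing G A (tc s) -> ~ In x (dom G) ->
    ctx_ok ((x, A) :: G)
with typing : ctx -> term -> term -> Prop :=
| ty_sort G s1 s2 : ctx_ok G -> Ax s1 s2 -> typing G (tc s1) (tc s2)
| ty_var G x A : ctx_ok G -> In (x, A) G -> typing G (tv x) A
| ty_prod G x A B s1 s2 s3 : Rl s1 s2 s3 -> typing G A (tc s1) ->
    (forall y, ~ In y (dom G) -> typing ((y, A) :: G) (usubst B x (tv y)) (tc s2)) ->
    typing G (tpi x A B) (tc s3)
| ty_abs G x y A B M s1 s2 s3 : Rl s1 s2 s3 -> typing G A (tc s1) ->
    (forall z, ~ In z (dom G) -> typing ((z, A) :: G) (usubst B y (tv z)) (tc s2)) ->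
    (forall z, ~ In z (dom G) ->
       typing ((z, A) :: G) (usubst M x (tv z)) (usubst B y (tv z))) ->
    typing G (tlam x A M) (tpi y A B)
| ty_app G M N x A B s : typing G M (tpi x A B) -> typing G N A ->
    typing G (usubst B x N) (tc s) -> typing G (tapp M N) (usubst B x N)
| ty_conv G M A B s : typing G M A -> beta_conv A B -> typing G B (tc s) ->
    typing G M B.

Definition ctx_alpha (G D : ctx) : Prop :=
  Forall2 (fun p q => fst p = fst q /\ alpha (snd p) (snd q)) G D.

End PTS.

(* Substituting renames every binder to a name chosen from the free variables
   alone, so alpha-equivalent terms have identical images under every
   substitution, and conversely [M ~ N] holds as soon as [M . iota = N . iota].
   Hence alpha is an equivalence compatible with substitution, and the side
   condition of an alpha-step between binders gives identical instances
   [M[x := z] = M'[x' := z]] for every [z], so the cofinitely quantified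
   premises of (prod) and (abs) carry over verbatim. The theorem follows by
   mutual induction on derivations; domain annotations that change up to alpha
   are repaired with (conv), as alpha is contained in beta-conversion. *)
From Pilot Require Import Defs.
From Stdlib Require Import List Relations.
Import ListNotations.

Lemma flat_map_flat_map {A B D : Type} (f : A -> list B) (g : B -> list D) l :
  flat_map g (flat_map f l) = flat_map (fun u => flat_map g (f u)) l.
Proof. induction l; simpl; [reflexivity|]. rewrite flat_map_app, IHl. reflexivity. Qed.

Lemma flat_map_ext_in {A B : Type} (f g : A -> list B) l :
  (forall u, In u l -> f u = g u) -> flat_map f l = flat_map g l.
Proof. rewrite !flat_map_concat_map. intro H. f_equal. apply map_ext_in, H. Qed.

Lemma flat_map_singleton {A : Type} (l : list A) : flat_map (fun u => [u]) l = l.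
Proof. induction l; simpl; congruence. Qed.

Scheme ctx_ok_min := Minimality for ctx_ok Sort Prop
  with typing_min := Minimality for typing Sort Prop.
Combined Scheme ctx_ok_typing_min from ctx_ok_min, typing_min.

Section Invariance.
Context {V C : Type}.
Variable (V_eq_dec : forall x y : V, {x = y} + {x <> y}).
Variables (encode : V -> nat) (decode : nat -> V) (chi' : list nat -> nat).
Hypothesis encode_decode : forall n, encode (decode n) = n.
Hypothesis chi'_fresh : forall ns, ~ In (chi' ns) ns.
Variables (Ax : C -> C -> Prop) (Rl : C -> C -> C -> Prop).

Local Notation term := (@term V C).
Local Notation fv := (@fv V C V_eq_dec).
Local Notation lremove := (@lremove V V_eq_dec).
Local Notation act := (@act V C V_eq_dec encode decode chi').
Local Notation Xs := (@Xs V C V_eq_dec encode decode chi').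
Local Notation Xp := (@Xp V encode decode chi').
Local Notation upd := (@upd V C V_eq_dec).
Local Notation usubst := (@usubst V C V_eq_dec encode decode chi').
Local Notation alpha := (@alpha V C V_eq_dec encode decode chi').
Local Notation iota := (@iota V C).
Local Notation ctx := (@Defs.ctx V C).
Local Notation dom := (@Defs.dom V C).
Local Notation typing := (@typing V C V_eq_dec encode decode chi' Ax Rl).
Local Notation ctx_ok := (@ctx_ok V C V_eq_dec encode decode chi' Ax Rl).
Local Notation ctx_alpha := (@ctx_alpha V C V_eq_dec encode decode chi').
Local Notation beta_conv := (@beta_conv V C V_eq_dec encode decode chi').

Lemma Xp_fresh xs : ~ In (Xp xs) xs.
Proof.
  intro H. apply (chi'_fresh (map encode xs)).
  rewrite <- (encode_decode (chi' _)). apply in_map, H.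
Qed.

Lemma Xs_fresh s l u : In u l -> ~ In (Xs s l) (fv (s u)).
Proof. intros Hu H. apply (Xp_fresh (flat_map (fun y => fv (s y)) l)), in_flat_map. eauto. Qed.

Lemma Xs_iota_fresh l : ~ In (Xs iota l) l.
Proof. intro H. apply (Xs_fresh iota l _ H). now left. Qed.

Lemma Xs_ext s s' l : (forall u, In u l -> s u = s' u) -> Xs s l = Xs s' l.
Proof.
  intro H. unfold Xs. f_equal. apply flat_map_ext_in. intros u Hu. now rewrite H.
Qed.

Lemma lremove_In l x y : In y (lremove l x) <-> In y l /\ y <> x.
Proof. unfold lremove. rewrite filter_In. destruct (V_eq_dec y x); intuition congruence. Qed.

Lemma lremove_app l1 l2 x : lremove (l1 ++ l2) x = lremove l1 x ++ lremove l2 x.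
Proof. apply filter_app. Qed.

Lemma lremove_notin l y : ~ In y l -> lremove l y = l.
Proof.
  induction l as [|a l IHl]; intro H; simpl; [reflexivity|].
  destruct (V_eq_dec a y) as [->|_]; [now destruct H; left|].
  f_equal. apply IHl. intro; apply H; now right.
Qed.

Lemma upd_eq s x N : upd s x N x = N.
Proof. unfold upd. now destruct (V_eq_dec x x). Qed.

Lemma upd_neq s x N y : y <> x -> upd s x N y = s y.
Proof. unfold upd. now destruct (V_eq_dec y x). Qed.

Lemma upd_ext s s' x N u : (u <> x -> s u = s' u) -> upd s x N u = upd s' x N u.
Proof. unfold upd. destruct (V_eq_dec u x); auto. Qed.

Lemma act_ext M : forall s s', (forall u, In u (fv M) -> s u = s' u) -> act M s = act M s'.
Proof.
  induction M as [k | x | x A IHA M IHM | x A IHA M IHM | M IHM N IHN];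
    intros s s' Hs; simpl in *; auto.
  1-2: rewrite (IHA s s'), (Xs_ext s s') by (intros; apply Hs, in_or_app; auto);
       f_equal; apply IHM; intros u Hu; apply upd_ext; intro;
       apply Hs, in_or_app; right; apply lremove_In; auto.
  rewrite (IHM s s'), (IHN s s'); auto; intros; apply Hs, in_or_app; auto.
Qed.

Lemma lremove_flat_map s l x y :
  (forall u, In u (lremove l x) -> ~ In y (fv (s u))) ->
  lremove (flat_map (fun u => fv (upd s x (tv y) u)) l) y =
  flat_map (fun u => fv (s u)) (lremove l x).
Proof.
  induction l as [|a l IHl]; intro Hy; simpl; [reflexivity|].
  rewrite lremove_app, IHl
    by (intros u Hu; apply lremove_In in Hu; apply Hy, lremove_In; simpl; tauto).
  unfold upd at 1; destruct (V_eq_dec a x) as [->|Hax]; simpl.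
  - now destruct (V_eq_dec y y).
  - rewrite lremove_notin; [reflexivity|]. apply Hy, lremove_In. simpl; auto.
Qed.

Lemma fv_act M : forall s, fv (act M s) = flat_map (fun u => fv (s u)) (fv M).
Proof.
  induction M as [k | x | x A IHA M IHM | x A IHA M IHM | M IHM N IHN];
    intro s; simpl.
  1: reflexivity.
  1: now rewrite app_nil_r.
  1-2: now rewrite flat_map_app, IHA, IHM, lremove_flat_map by apply Xs_fresh.
  now rewrite flat_map_app, IHM, IHN.
Qed.

Section BinderComposition.
Variables (s t : V -> term) (M : term) (x y : V).
Hypothesis y_fresh : forall u, In u (lremove (fv M) x) -> ~ In y (fv (s u)).

Lemma Xs_act_comp :
  Xs t (lremove (fv (act M (upd s x (tv y)))) y) =
  Xs (fun u => act (s u) t) (lremove (fv M) x).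
Proof.
  unfold Xs. rewrite fv_act, lremove_flat_map, flat_map_flat_map by assumption.
  f_equal. apply flat_map_ext_in. intros u _. now rewrite fv_act.
Qed.

Lemma act_upd_comp z :
  act M (fun u => act (upd s x (tv y) u) (upd t y (tv z))) =
  act M (upd (fun u => act (s u) t) x (tv z)).
Proof.
  apply act_ext. intros u Hu. destruct (V_eq_dec u x) as [->|Hux].
  - now rewrite !upd_eq; simpl; rewrite upd_eq.
  - rewrite !upd_neq by assumption. apply act_ext. intros w Hw. apply upd_neq.
    intros ->. apply (y_fresh u); [apply lremove_In|]; auto.
Qed.

End BinderComposition.

Lemma act_comp M : forall s t, act (act M s) t = act M (fun u => act (s u) t).
Proof.
  induction M as [k | x | x A IHA M IHM | x A IHA M IHM | M IHM N IHN];
    intros s t; simpl.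
  1-2: reflexivity.
  1-2: now rewrite IHA, Xs_act_comp, IHM, act_upd_comp by apply Xs_fresh.
  now rewrite IHM, IHN.
Qed.

Lemma fv_usubst_rename M x y :
  ~ In y (lremove (fv M) x) -> lremove (fv (usubst M x (tv y))) y = lremove (fv M) x.
Proof.
  intro Hy. unfold usubst. rewrite fv_act, lremove_flat_map.
  - apply flat_map_singleton.
  - intros u Hu [->|[]]. contradiction.
Qed.

Lemma act_rename M x y s z :
  ~ In y (lremove (fv M) x) ->
  act M (upd s x (tv z)) = act (usubst M x (tv y)) (upd s y (tv z)).
Proof.
  intro Hy. unfold usubst. rewrite act_comp. apply act_ext. intros u Hu.
  destruct (V_eq_dec u x) as [->|Hux].
  - now rewrite !upd_eq; simpl; rewrite upd_eq.
  - rewrite !upd_neq by assumption. simpl. rewrite upd_neq; [reflexivity|].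
    intros ->. apply Hy, lremove_In. auto.
Qed.

Lemma binder_alpha_act M x M' x' y :
  ~ In y (lremove (fv M) x) -> ~ In y (lremove (fv M') x') ->
  usubst M x (tv y) = usubst M' x' (tv y) ->
  lremove (fv M) x = lremove (fv M') x' /\
  forall s z, act M (upd s x (tv z)) = act M' (upd s x' (tv z)).
Proof.
  intros Hy Hy' Heq. split.
  - now rewrite <- (fv_usubst_rename M x y), <- (fv_usubst_rename M' x' y), Heq.
  - intros s z. now rewrite (act_rename M x y), (act_rename M' x' y), Heq.
Qed.

Lemma alpha_act M N : alpha M N -> forall s, act M s = act N s.
Proof.
  induction 1 as [k | x | M N M' N' _ IHM _ IHN
                 | x A M x' A' M' y _ IHA Hy Hy' Heq
                 | x A M x' A' M' y _ IHA Hy Hy' Heq]; intro s; simpl.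
  1-2: reflexivity.
  1: now rewrite IHM, IHN.
  1-2: destruct (binder_alpha_act M x M' x' y Hy Hy' Heq) as [Hfv Hbody];
       now rewrite Hfv, IHA, Hbody.
Qed.

Lemma act_alpha M N : act M iota = act N iota -> alpha M N.
Proof.
  revert N.
  induction M as [k | x | x A IHA M IHM | x A IHA M IHM | M IHM N IHN];
    intros [k' | x' | x' A' M' | x' A' M' | M' N'] Heq; simpl in Heq;
    try discriminate; injection Heq.
  - intros ->. constructor.
  - intros ->. constructor.
  - intros Hbody HA Hy. apply alpha_lam with (y := Xs iota (lremove (fv M) x)).
    + now apply IHA.
    + apply Xs_iota_fresh.
    + rewrite Hy. apply Xs_iota_fresh.
    + unfold usubst. now rewrite Hbody, Hy.
  - intros Hbody HA Hy. apply alpha_pi with (y := Xs iota (lremove (fv M) x)).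
    + now apply IHA.
    + apply Xs_iota_fresh.
    + rewrite Hy. apply Xs_iota_fresh.
    + unfold usubst. now rewrite Hbody, Hy.
  - intros HN HM. constructor; auto.
Qed.

Lemma alpha_refl M : alpha M M.
Proof. now apply act_alpha. Qed.

Lemma alpha_sym M N : alpha M N -> alpha N M.
Proof. intro H. apply act_alpha. symmetry. now apply alpha_act. Qed.

Lemma alpha_usubst M x N N' : alpha N N' -> alpha (usubst M x N) (usubst M x N').
Proof.
  intro H. apply act_alpha. unfold usubst. rewrite !act_comp.
  apply act_ext. intros u _. unfold upd. destruct (V_eq_dec u x); auto.
  now apply alpha_act.
Qed.

Lemma alpha_pi_ty x A A' B : alpha A A' -> alpha (tpi x A B) (tpi x A' B).
Proof. intro H. apply act_alpha. simpl. now rewrite (alpha_act A A'). Qed.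

Lemma alpha_beta_conv A B : alpha A B -> beta_conv A B.
Proof. intro H. apply rst_step. now left. Qed.

Lemma usubst_alpha_binder M x M' x' y :
  ~ In y (lremove (fv M) x) -> ~ In y (lremove (fv M') x') ->
  usubst M x (tv y) = usubst M' x' (tv y) ->
  forall z, alpha (usubst M x (tv z)) (usubst M' x' (tv z)).
Proof.
  intros Hy Hy' Heq z. destruct (binder_alpha_act M x M' x' y Hy Hy' Heq) as [_ Hbody].
  unfold usubst. rewrite Hbody. apply alpha_refl.
Qed.

Lemma notin_dom_incl (G G' : ctx) y : incl G G' -> ~ In y (dom G') -> ~ In y (dom G).
Proof.
  intros Hincl Hy HyG. apply Hy. apply in_map_iff in HyG as [p [<- Hp]].
  now apply in_map, Hincl.
Qed.

Lemma typing_weaken G M A :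
  typing G M A -> forall G', incl G G' -> ctx_ok G' -> typing G' M A.
Proof.
  induction 1 as [G s1 s2 _ Hax | G x A _ Hin
                 | G x A B s1 s2 s3 Hr _ IHA _ IHB
                 | G x y A B M s1 s2 s3 Hr _ IHA _ IHB _ IHM
                 | G M N x A B s _ IHM _ IHN _ IHB | G M A B s _ IHM Hc _ IHB];
    intros G' Hincl Hok.
  - now constructor.
  - constructor; auto.
  - apply ty_prod with s1 s2; auto. intros y Hy. apply IHB.
    + exact (notin_dom_incl _ _ _ Hincl Hy).
    + now apply incl_cons; [left | apply incl_tl].
    + econstructor; eauto.
  - apply ty_abs with s1 s2 s3; auto; intros z Hz; [apply IHB | apply IHM].
    1,4: exact (notin_dom_incl _ _ _ Hincl Hz).
    1,3: now apply incl_cons; [left | apply incl_tl].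
    all: econstructor; eauto.
  - eapply ty_app; eauto.
  - eapply ty_conv; eauto.
Qed.

Lemma ctx_alpha_dom G D : ctx_alpha G D -> dom G = dom D.
Proof. induction 1 as [|[x A] [y B] G D [Hxy _] _ IH]; simpl in *; congruence. Qed.

Lemma ctx_alpha_cons x A A' G D :
  alpha A A' -> ctx_alpha G D -> ctx_alpha ((x, A) :: G) ((x, A') :: D).
Proof. intros HA HGD. now constructor. Qed.

Lemma ctx_alpha_In G D x A :
  ctx_alpha G D -> In (x, A) G -> exists A', In (x, A') D /\ alpha A A'.
Proof.
  induction 1 as [|[y B] [y' B'] G D [Hy HB] _ IH]; simpl in *; [contradiction|].
  intros [[= -> ->]|Hin].
  - subst y'. exists B'. auto.
  - destruct (IH Hin) as [A' [? ?]]. exists A'. auto.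
Qed.

(* The entries' types are carried along because the variable case has to
   convert from the type recorded in [D] back to the one recorded in [G]. *)
Definition ctx_ok_alpha_invariant (G : ctx) : Prop :=
  forall D, ctx_alpha G D ->
    ctx_ok D /\ forall x A, In (x, A) G -> exists s, typing D A (tc s).

Definition typing_alpha_invariant (G : ctx) (M A : term) : Prop :=
  forall D N, ctx_alpha G D -> alpha M N -> typing D N A.

Lemma invariant_ok_nil : ctx_ok_alpha_invariant [].
Proof.
  intros D HD. inversion HD. split; [constructor | intros ? ? []].
Qed.

Lemma invariant_ok_cons G x A s :
  ctx_ok_alpha_invariant G -> typing_alpha_invariant G A (tc s) -> ~ In x (dom G) ->
  ctx_ok_alpha_invariant ((x, A) :: G).
Proof.
  intros IHG IHA Hx D HD.
  inversion HD as [|p [x' A'] G0 D0 [Hx' HAA'] HGD]; simpl in Hx', HAA'; subst x'; subst.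
  destruct (IHG D0 HGD) as [HokD HentD].
  assert (HokD' : ctx_ok ((x, A') :: D0)).
  { apply ok_cons with s.
    - exact HokD.
    - now apply IHA.
    - now rewrite <- (ctx_alpha_dom _ _ HGD). }
  split; [exact HokD'|]. intros z B [[= <- <-]|Hin].
  - exists s. apply typing_weaken with D0; auto using incl_tl, incl_refl, alpha_refl.
  - destruct (HentD z B Hin) as [s' Hs']. exists s'.
    apply typing_weaken with D0; auto using incl_tl, incl_refl.
Qed.

Lemma invariant_ty_sort G s1 s2 :
  ctx_ok_alpha_invariant G -> Ax s1 s2 -> typing_alpha_invariant G (tc s1) (tc s2).
Proof.
  intros IHG Hax D N HD Ha. inversion Ha; subst.
  constructor; [apply (IHG D HD) | exact Hax].
Qed.

Lemma invariant_ty_var G x A :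
  ctx_ok_alpha_invariant G -> In (x, A) G -> typing_alpha_invariant G (tv x) A.
Proof.
  intros IHG Hin D N HD Ha. inversion Ha; subst.
  destruct (IHG D HD) as [HokD HentD].
  destruct (ctx_alpha_In _ _ _ _ HD Hin) as [A' [HinD HAA']].
  destruct (HentD x A Hin) as [s Hs].
  apply ty_conv with A' s; [now constructor | |exact Hs].
  now apply alpha_beta_conv, alpha_sym.
Qed.

Lemma invariant_ty_prod G x A B s1 s2 s3 :
  Rl s1 s2 s3 -> typing_alpha_invariant G A (tc s1) ->
  (forall y, ~ In y (dom G) ->
     typing_alpha_invariant ((y, A) :: G) (usubst B x (tv y)) (tc s2)) ->
  typing_alpha_invariant G (tpi x A B) (tc s3).
Proof.
  intros Hr IHA IHB D N HD Ha.
  inversion Ha as [| | | |x1 A1 B1 x' A' B' y0 HAA' Hy Hy' Heq]; subst.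
  apply ty_prod with s1 s2; [exact Hr | now apply IHA|].
  intros y Hy0. apply (IHB y).
  - now rewrite (ctx_alpha_dom _ _ HD).
  - now apply ctx_alpha_cons.
  - exact (usubst_alpha_binder B x B' x' y0 Hy Hy' Heq y).
Qed.

Lemma invariant_ty_abs G x y A B M s1 s2 s3 :
  Rl s1 s2 s3 -> typing_alpha_invariant G A (tc s1) ->
  (forall z, ~ In z (dom G) ->
     typing_alpha_invariant ((z, A) :: G) (usubst B y (tv z)) (tc s2)) ->
  (forall z, ~ In z (dom G) ->
     typing_alpha_invariant ((z, A) :: G) (usubst M x (tv z)) (usubst B y (tv z))) ->
  typing_alpha_invariant G (tlam x A M) (tpi y A B).
Proof.
  intros Hr IHA IHB IHM D N HD Ha.
  inversion Ha as [| | |x1 A1 M1 x' A' M' y0 HAA' Hy Hy' Heq|]; subst.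
  assert (Hdom : forall z, ~ In z (dom D) -> ~ In z (dom G))
    by (intros z; now rewrite (ctx_alpha_dom _ _ HD)).
  apply ty_conv with (tpi y A' B) s3.
  - apply ty_abs with s1 s2 s3; [exact Hr | now apply IHA | |];
      intros z Hz; [apply (IHB z) | apply (IHM z)]; auto using ctx_alpha_cons.
    + apply alpha_refl.
    + exact (usubst_alpha_binder M x M' x' y0 Hy Hy' Heq z).
  - now apply alpha_beta_conv, alpha_pi_ty, alpha_sym.
  - apply ty_prod with s1 s2; [exact Hr | apply IHA; auto using alpha_refl |].
    intros z Hz. apply (IHB z); auto using ctx_alpha_cons, alpha_refl.
Qed.

Lemma invariant_ty_app G M N x A B s :
  typing_alpha_invariant G M (tpi x A B) -> typing_alpha_invariant G N A ->
  typing_alpha_invariant G (usubst B x N) (tc s) ->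
  typing_alpha_invariant G (tapp M N) (usubst B x N).
Proof.
  intros IHM IHN IHB D P HD Ha.
  inversion Ha as [| |M1 N1 M' N' HM HN| |]; subst.
  apply ty_conv with (usubst B x N') s.
  - apply ty_app with A s; auto. apply IHB; auto using alpha_usubst.
  - now apply alpha_beta_conv, alpha_usubst, alpha_sym.
  - apply IHB; auto using alpha_refl.
Qed.

Lemma invariant_ty_conv G M A B s :
  typing_alpha_invariant G M A -> beta_conv A B -> typing_alpha_invariant G B (tc s) ->
  typing_alpha_invariant G M B.
Proof.
  intros IHM Hc IHB D N HD Ha.
  apply ty_conv with A s; auto. apply IHB; auto using alpha_refl.
Qed.

Lemma alpha_invariance :
  (forall G, ctx_ok G -> ctx_ok_alpha_invariant G) /\
  (forall G M A, typing G M A -> typing_alpha_invariant G M A).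
Proof.
  apply ctx_ok_typing_min; intros.
  - exact invariant_ok_nil.
  - eapply invariant_ok_cons; eauto.
  - now apply invariant_ty_sort.
  - now apply invariant_ty_var.
  - eapply invariant_ty_prod; eauto.
  - eapply invariant_ty_abs; eauto.
  - eapply invariant_ty_app; eauto.
  - eapply invariant_ty_conv; eauto.
Qed.

End Invariance.

Theorem mainTheorem14 (V C : Type) (V_eq_dec : forall x y : V, {x = y} + {x <> y})
  (encode : V -> nat) (decode : nat -> V)
  (Hdec : forall n, encode (decode n) = n)
  (chi' : list nat -> nat) (Hchi : forall ns, ~ In (chi' ns) ns)
  (Ax : C -> C -> Prop) (Rl : C -> C -> C -> Prop) :
  (forall G D : @ctx V C,
     ctx_alpha V_eq_dec encode decode chi' G D ->
     ctx_ok V_eq_dec encode decode chi' Ax Rl G ->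
     ctx_ok V_eq_dec encode decode chi' Ax Rl D) /\
  (forall (G D : @ctx V C) (M N A : @term V C),
     ctx_alpha V_eq_dec encode decode chi' G D ->
     alpha V_eq_dec encode decode chi' M N ->
     typing V_eq_dec encode decode chi' Ax Rl G M A ->
     typing V_eq_dec encode decode chi' Ax Rl D N A).
Proof.
  destruct (alpha_invariance V_eq_dec encode decode chi' Hdec Hchi Ax Rl)
    as [ok_invariant typing_invariant].
  split.
  - intros G D HD Hok. exact (proj1 (ok_invariant G Hok D HD)).
  - intros G D M N A HD Ha Ht. exact (typing_invariant G M A Ht D N HD Ha).
Qed.
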